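(* Let $(\Omega,\Sigma,\mu)$ be a finite measure space and let $X(\mu)$ and $Y(\mu)$ be Banach rectangular function spaces with the subsequence property. (i) If $T:X(\mu)\to Y(\mu)$ is a positive linear operator ($Tf\ge0$ whenever $f\ge 0$), then $T$ is continuous. (ii) If $X(\mu)$, with norm $\|\cdot\|$, is also a Banach rectangular function space with the subsequence property under another norm $\|\cdot\|_0$, then $\|\cdot\|$ and $\|\cdot\|_0$ are equivalent norms.
   Context: $L^0(\mu)$ is the space of equivalence classes (modulo $\mu$-a.e. equality) of real $\Sigma$-measurable functions, ordered $\mu$-a.e. A Banach rectangular function space is a vector subspace $X(\mu)\subseteq L^0(\mu)$ with a complete norm such that for some $C>0$, $\chi_Af\in X(\mu)$ and $\|\chi_Af\|\le C\|f\|$ for all $f\in X(\mu)$, $A\in\Sigma$. Subsequence property: whenever $f_n,f\in X(\mu)$ and $f_n\to f$ in norm, some subsequence converges to $f$ $\mu$-a.e. *)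

From HB Require Import structures.
From mathcomp Require Import all_boot all_order all_algebra.
From mathcomp Require Import all_classical all_reals all_analysis.
Set Implicit Arguments. Unset Strict Implicit. Unset Printing Implicit Defensive.
Import Order.TTheory GRing.Theory Num.Theory.
Import numFieldNormedType.Exports.
Local Open Scope classical_set_scope.
Local Open Scope ring_scope.

(* Elements of L^0(mu) are represented by measurable functions T -> R; a
   "function space" X(mu) is represented by the set X of all representatives
   of its classes (closed under a.e. equality), and its norm by a map
   N : (T -> R) -> R that is constant on a.e.-classes.  The norm vanishing
   exactly on the class of 0 makes N a genuine norm on the quotient. *)
Section Defs.
Context {d : measure_display} {T : measurableType d} {R : realType}.
Variable mu : {measure set T -> \bar R}.

Definition banach_rect_space (X : set (T -> R)) (N : (T -> R) -> R) : Prop :=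
  [/\
      (forall f, X f -> measurable_fun setT f) /\
      (forall f g, X f -> measurable_fun setT g ->
          {ae mu, forall x, f x = g x} -> X g /\ N g = N f),
      [/\ X (fun _ => 0),
          (forall f g, X f -> X g -> X (fun x => f x + g x)) &
          (forall (a : R) f, X f -> X (fun x => a * f x))],
      [/\ (forall f, X f -> 0 <= N f),
          (forall f, X f -> (N f = 0 <-> {ae mu, forall x, f x = 0})),
          (forall f g, X f -> X g -> N (fun x => f x + g x) <= N f + N g) &
          (forall (a : R) f, X f -> N (fun x => a * f x) = `|a| * N f)],
      (forall u : nat -> T -> R, (forall n, X (u n)) ->
          (forall e : R, 0 < e -> exists M, forall m n, (M <= m)%N -> (M <= n)%N ->
              N (fun x => u n x - u m x) < e) ->
          exists2 f, X f & (fun n => N (fun x => u n x - f x)) @ \oo --> (0 : R)) &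
      exists2 C : R, 0 < C & forall f A, X f -> measurable A ->
          X (fun x => \1_A x * f x) /\ N (fun x => \1_A x * f x) <= C * N f].

Definition subsequence_property (X : set (T -> R)) (N : (T -> R) -> R) : Prop :=
  forall (u : nat -> T -> R) f, (forall n, X (u n)) -> X f ->
    (fun n => N (fun x => u n x - f x)) @ \oo --> (0 : R) ->
    exists phi : nat -> nat, {homo phi : m n / (m < n)%N} /\
      {ae mu, forall x, (fun n => u (phi n) x) @ \oo --> f x}.

Definition positive_linear_op (X Y : set (T -> R)) (Top : (T -> R) -> (T -> R))
  : Prop :=
  [/\ (forall f, X f -> Y (Top f)),
      (forall f g, X f -> X g -> {ae mu, forall x, f x = g x} ->
          {ae mu, forall x, Top f x = Top g x}),
      (forall f g (a : R), X f -> X g ->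
          {ae mu, forall x, Top (fun y => f y + a * g y) x = Top f x + a * Top g x}) &
      (forall f, X f -> {ae mu, forall x, 0 <= f x} ->
          {ae mu, forall x, 0 <= Top f x})].

Definition op_continuous (X : set (T -> R)) (NX NY : (T -> R) -> R)
  (Top : (T -> R) -> (T -> R)) : Prop :=
  forall f, X f -> forall e : R, 0 < e -> exists2 del : R, 0 < del &
    forall g, X g -> NX (fun x => g x - f x) < del ->
      NY (fun x => Top g x - Top f x) < e.

Definition equivalent_norms (X : set (T -> R)) (N1 N2 : (T -> R) -> R) : Prop :=
  exists c C : R, [/\ 0 < c, 0 < C &
    forall f, X f -> c * N1 f <= N2 f /\ N2 f <= C * N1 f].
End Defs.

From HB Require Import structures.
From mathcomp Require Import all_boot all_order all_algebra.
From mathcomp Require Import all_classical all_reals all_analysis.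
From mathcomp Require Import ring lra.
Import Order.TTheory GRing.Theory Num.Theory.
Import numFieldNormedType.Exports.
Set Implicit Arguments.
Unset Strict Implicit.
Unset Printing Implicit Defensive.
Local Open Scope classical_set_scope.
Local Open Scope ring_scope.

(* If a positive operator T were unbounded, there would be h_n with
   ||h_n|| <= 2^-n and ||T h_n|| > n.  The series G = sum_n |h_n| converges
   in X and, by the subsequence property, dominates every |h_n| a.e., so
   positivity gives |T h_n| <= T G a.e.  Completeness, rectangularity and the
   subsequence property of Y make its norm monotone up to a constant K
   (expand f/g dyadically when |f| <= g), whence n < ||T h_n|| <= K ||T G||
   for all n.  Part (ii) applies this to the identity in both directions. *)

Lemma homo_ltn_leq_id (phi : nat -> nat) :
  {homo phi : m n / (m < n)%N} -> forall n, (n <= phi n)%N.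
Proof. by move=> phi_incr; elim=> // n IH; exact: leq_ltn_trans IH (phi_incr n n.+1 _). Qed.

Lemma exists_exp2V_lt {R : archiRealFieldType} (c e : R) : 0 < e ->
  exists k : nat, 2 ^- k * c < e.
Proof.
move=> e0; have [c0|c0] := leP c 0.
  by exists 0%N; rewrite expr0 invr1 mul1r; exact: le_lt_trans c0 e0.
have ce0 : 0 <= c / e by rewrite divr_ge0 // ltW.
exists (Num.Def.archi_bound (c / e)); set k := Num.Def.archi_bound _.
have k_le_exp : (k%:R : R) <= 2 ^+ k.
  by rewrite -natrX ler_nat; exact/ltnW/ltn_expl.
move: (lt_le_trans (archi_boundP ce0) k_le_exp); rewrite ltr_pdivrMr // => c_lt.
by rewrite ltr_pdivrMl ?exprn_gt0.
Qed.

Section BanachRectSpace.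
Context {d : measure_display} {T : measurableType d} {R : realType}.
Variable mu : {measure set T -> \bar R}.
Variables (X : set (T -> R)) (N : (T -> R) -> R).
Hypothesis HX : banach_rect_space mu X N.

Lemma brs_measurable f : X f -> measurable_fun setT f.
Proof. by case: HX => -[+ _] _ _ _ _; exact. Qed.

Lemma brs0 : X (fun _ => 0).
Proof. by case: HX => _ []. Qed.

Lemma brsD f g : X f -> X g -> X (fun x => f x + g x).
Proof. by case: HX => _ [_ + _] _ _ _; exact. Qed.

Lemma brsZ (a : R) f : X f -> X (fun x => a * f x).
Proof. by case: HX => _ [_ _ +] _ _ _; exact. Qed.

Lemma brsN f : X f -> X (fun x => - f x).
Proof. by move=> /(brsZ (-1)); under eq_fun do rewrite mulN1r. Qed.

Lemma brsB f g : X f -> X g -> X (fun x => f x - g x).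
Proof. by move=> Xf /brsN; exact: brsD. Qed.

Lemma brs_indic f A : X f -> measurable A -> X (fun x => \1_A x * f x).
Proof. by case: HX => _ _ _ _ [C _ HC] Xf mA; case: (HC f A Xf mA). Qed.

Lemma brs_complete (u : nat -> T -> R) : (forall n, X (u n)) ->
  (forall e : R, 0 < e -> exists M, forall m n, (M <= m)%N -> (M <= n)%N ->
      N (fun x => u n x - u m x) < e) ->
  exists2 f, X f & (fun n => N (fun x => u n x - f x)) @ \oo --> 0.
Proof. by case: HX => _ _ _ + _; exact. Qed.

Lemma brs_norm_ge0 f : X f -> 0 <= N f.
Proof. by case: HX => _ _ [+ _ _ _] _ _; exact. Qed.

Lemma brs_normD f g : X f -> X g -> N (fun x => f x + g x) <= N f + N g.
Proof. by case: HX => _ _ [_ _ + _] _ _; exact. Qed.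

Lemma brs_normZ (a : R) f : X f -> N (fun x => a * f x) = `|a| * N f.
Proof. by case: HX => _ _ [_ _ _ +] _ _; exact. Qed.

Lemma brs_norm_ae_eq f g : X f -> X g -> {ae mu, forall x, f x = g x} -> N f = N g.
Proof.
move=> Xf Xg fg; case: HX => -[_ ae_eq] _ _ _ _.
by case: (ae_eq f g Xf (brs_measurable Xg) fg).
Qed.

Lemma brs_norm0 : N (fun _ => 0) = 0.
Proof. by case: HX => _ _ [_ + _ _] _ _ => /(_ _ brs0) [_]; apply; exact: aeW. Qed.

Lemma brs_normN f : X f -> N (fun x => - f x) = N f.
Proof.
move=> Xf; rewrite -[RHS]mul1r -normrN1 -brs_normZ //.
by under [in RHS]eq_fun do rewrite mulN1r.
Qed.

Lemma brs_distC f g : X f -> X g ->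
  N (fun x => f x - g x) = N (fun x => g x - f x).
Proof.
move=> Xf Xg; rewrite -(brs_normN (brsB Xg Xf)).
by congr N; apply/funext => x; rewrite opprB.
Qed.

Lemma brs_dist_triangle f g h : X f -> X g -> X h ->
  N (fun x => f x - h x) <= N (fun x => f x - g x) + N (fun x => g x - h x).
Proof.
move=> Xf Xg Xh; have := brs_normD (brsB Xf Xg) (brsB Xg Xh).
by under eq_fun do rewrite addrA subrK.
Qed.

Lemma brs_norm_le_dist f g : X f -> X g -> N g <= N f + N (fun x => f x - g x).
Proof.
move=> Xf Xg; rewrite addrC brs_distC //.
have := brs_dist_triangle Xg Xf brs0.
by under eq_fun do rewrite subr0; under [in X in _ <= _ + X]eq_fun do rewrite subr0.
Qed.

Lemma brs_norm_indic : exists2 C : R, 0 < C & forall f A, X f -> measurable A ->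
  N (fun x => \1_A x * f x) <= C * N f.
Proof. by case: HX => _ _ _ _ [C C0 HC]; exists C => // f A Xf mA; case: (HC f A Xf mA). Qed.

Lemma brs_cauchy_geometric (v : nat -> T -> R) (c : R) : (forall k, X (v k)) ->
  (forall k, N (fun x => v k.+1 x - v k x) <= 2 ^- k * c) ->
  exists2 w, X w & (fun n => N (fun x => v n x - w x)) @ \oo --> 0 /\
    forall k, N (fun x => v k x - w x) <= 2 * (2 ^- k * c).
Proof.
move=> Xv vc.
have c0 : 0 <= c.
  have := vc 0%N; rewrite expr0 invr1 mul1r; apply: le_trans.
  exact/brs_norm_ge0/brsB.
have exp2Vc_ge0 k : 0 <= 2 ^- k * c by rewrite mulr_ge0 // invr_ge0 exprn_ge0.
have dist_le k n : (k <= n)%N ->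
    N (fun x => v n x - v k x) <= 2 * (2 ^- k * c) - 2 * (2 ^- n * c).
  move/subnK <-; elim: (n - k)%N => [|m IH].
    by rewrite add0n subrr; under eq_fun do rewrite subrr; rewrite brs_norm0.
  apply: le_trans (brs_dist_triangle (Xv _) (Xv (m + k)%N) (Xv k)) _.
  have := vc (m + k)%N; rewrite addSn.
  have -> : 2 ^- (m + k).+1 * c = 2 ^- (m + k) * c / 2.
    by rewrite exprS invfM [RHS]mulrC mulrA.
  lra.
have [w Xw cvw] : exists2 w, X w & (fun n => N (fun x => v n x - w x)) @ \oo --> 0.
  apply: brs_complete => // e e0.
  have [M HM] := exists_exp2V_lt (4 * c) e0.
  exists M => m n Mm Mn.
  apply: le_lt_trans (brs_dist_triangle (Xv n) (Xv M) (Xv m)) _.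
  rewrite (brs_distC (Xv M)) //.
  have := dist_le _ _ Mm; have := dist_le _ _ Mn.
  have := exp2Vc_ge0 m; have := exp2Vc_ge0 n; move: HM; rewrite mulrCA; lra.
exists w => //; split => // k.
apply/ler_addgt0Pr => e e0.
have [M _ HM] := cvgr0_norm_lt _ cvw _ e0.
have /= := HM (maxn k M) (leq_maxr k M).
move=> /(le_lt_trans (ler_norm _)) dist_lt.
apply: le_trans (brs_dist_triangle (Xv k) (Xv (maxn k M)) Xw) _.
rewrite (brs_distC (Xv k)) //.
have := dist_le _ _ (leq_maxl k M); have := exp2Vc_ge0 (maxn k M); lra.
Qed.

Lemma brs_abs : exists2 C : R, 0 < C & forall f, X f ->
  X (fun x => `|f x|) /\ N (fun x => `|f x|) <= C * N f.
Proof.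
have [C C0 HC] := brs_norm_indic.
exists (C + C); first by rewrite addr_gt0.
move=> f Xf; pose A := [set x | 0 <= f x].
have mA : measurable A.
  have := measurable_fun_le measurableT (measurable_cst (0 : R)) (brs_measurable Xf).
  by rewrite setTI.
have mAC : measurable (~` A) by exact: measurableC.
have -> : (fun x => `|f x|) = (fun x => \1_A x * f x - \1_(~` A) x * f x).
  apply/funext => x; rewrite !indicE in_setC.
  have [f0|f0] := leP 0 (f x).
    by rewrite mem_set //= mul1r mul0r subr0 ger0_norm.
  rewrite memNset /= ?mul0r ?sub0r ?mul1r ?ltr0_norm //.
  by rewrite /A /= leNgt f0.
split; first by apply: brsB; exact: brs_indic.
apply: le_trans (brs_normD (brs_indic Xf mA) (brsN (brs_indic Xf mAC))) _.
rewrite brs_normN; last exact: brs_indic.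
by rewrite mulrDl lerD // HC.
Qed.

(* Bisection of f against g: each step adds an indicator times 2^-k g, the only
   kind of multiplier that rectangularity controls. *)
Fixpoint dyadic_approx (f g : T -> R) (k : nat) : T -> R :=
  if k is k'.+1 then
    let s := dyadic_approx f g k' in
    fun x => s x + \1_[set y | s y + 2 ^- k' * g y <= f y] x * (2 ^- k' * g x)
  else fun x => - g x.

Lemma dyadic_approx_bounds f g k x : `|f x| <= g x ->
  dyadic_approx f g k x <= f x <= dyadic_approx f g k x + 2 * (2 ^- k * g x).
Proof.
move=> fg; elim: k => [|k IH] /=.
  rewrite expr0 invr1 mul1r; move: fg; rewrite ler_norml => /andP[? ?].
  by apply/andP; split; lra.
move/andP: IH => [sf fs]; set s := dyadic_approx f g k in sf fs *.
have -> : 2 ^- k.+1 * g x = 2 ^- k * g x / 2 by rewrite exprS invfM [RHS]mulrC !mulrA.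
rewrite indicE; have [le_sf|lt_fs] := leP (s x + 2 ^- k * g x) (f x).
  by rewrite mem_set //= mul1r; apply/andP; split; lra.
rewrite memNset /= ?mul0r ?addr0; first by apply/andP; split; lra.
by apply/negP; rewrite -ltNge.
Qed.

Lemma measurable_dyadic_step f g k : measurable_fun setT f -> X g ->
  X (dyadic_approx f g k) ->
  measurable [set y | dyadic_approx f g k y + 2 ^- k * g y <= f y].
Proof.
move=> mf Xg XSk; rewrite -[X in measurable X]setTI.
exact: measurable_fun_le (brs_measurable (brsD XSk (brsZ _ Xg))) mf.
Qed.

Lemma brs_dyadic_approx f g k : measurable_fun setT f -> X g -> X (dyadic_approx f g k).
Proof.
move=> mf Xg; elim: k => [|k IH] /=; first exact: brsN.
by apply: brsD => //; apply: brs_indic; [exact: brsZ | exact: measurable_dyadic_step].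
Qed.

Hypothesis HXs : subsequence_property mu X N.

Lemma brs_ae_closed_lim (v : nat -> T -> R) w (P : nat -> T -> set R) :
  (forall k, X (v k)) -> X w -> (fun n => N (fun x => v n x - w x)) @ \oo --> 0 ->
  (forall i x, closed (P i x)) ->
  {ae mu, forall x i, \forall n \near \oo, P i x (v n x)} ->
  {ae mu, forall x i, P i x (w x)}.
Proof.
move=> Xv Xw cvw P_closed evP.
have [phi [phi_incr cv_phi]] := HXs Xv Xw cvw.
apply: filterS2 evP cv_phi => x evPx cvx i.
apply: (closed_cvg _ (P_closed i x) _ _ cvx).
case: (evPx i) => M _ HM; exists M => // n /= Mn.
exact/HM/(leq_trans Mn (homo_ltn_leq_id phi_incr n)).
Qed.

Lemma brs_series_dominated (a : nat -> T -> R) (c : R) :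
  (forall k, X (a k)) -> (forall k x, 0 <= a k x) -> (forall k, N (a k) <= 2 ^- k * c) ->
  exists2 G, X G & {ae mu, forall x k, a k x <= G x}.
Proof.
move=> Xa a_ge0 Na.
pose S n x := \sum_(i < n) a i x.
have XS n : X (S n).
  elim: n => [|n IH]; rewrite /S.
    by under eq_fun do rewrite big_ord0; exact: brs0.
  by under eq_fun do rewrite big_ord_recr /=; exact: brsD.
have S_incr n : N (fun x => S n.+1 x - S n x) <= 2 ^- n * c.
  by rewrite /S; under eq_fun do rewrite big_ord_recr /= addrAC subrr add0r; exact: Na.
have [G XG [cvG _]] := brs_cauchy_geometric XS S_incr.
exists G => //.
apply: (brs_ae_closed_lim (P := fun k x => [set y | a k x <= y]) XS XG cvG).
  by move=> k x; exact: closed_ge.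
apply: aeW => x k; exists k.+1 => // n /= kn.
rewrite /S (bigD1 (Ordinal kn)) //= lerDl; exact: sumr_ge0.
Qed.

Lemma brs_norm_le_dominated : exists2 K : R, 0 < K & forall f g, X f -> X g ->
  {ae mu, forall x, `|f x| <= g x} -> N f <= K * N g.
Proof.
have [C C0 HC] := brs_norm_indic.
exists (1 + 2 * C); first lra.
move=> f g Xf Xg fg; pose S := dyadic_approx f g.
have XS k : X (S k) by exact: brs_dyadic_approx (brs_measurable Xf) Xg.
have S_incr k : N (fun x => S k.+1 x - S k x) <= 2 ^- k * (C * N g).
  rewrite /=; under eq_fun do rewrite addrAC subrr add0r.
  apply: le_trans (HC _ _ (brsZ _ Xg) _) _.
    exact: measurable_dyadic_step (brs_measurable Xf) Xg (XS k).
  by rewrite brs_normZ // ger0_norm ?invr_ge0 ?exprn_ge0 // mulrCA.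
have [w Xw [cvw dist_w]] := brs_cauchy_geometric XS S_incr.
have exp2V_le i n : (i <= n)%N -> 2 ^- n <= 2 ^- i :> R.
  by move=> i_n; rewrite -!exprVn ler_wiXn2l // ?invr_ge0 ?invf_le1 ?ler1n.
have w_in : {ae mu, forall x i, f x - 2 * (2 ^- i * g x) <= w x /\ w x <= f x}.
  apply: (brs_ae_closed_lim
    (P := fun i x => [set y | f x - 2 * (2 ^- i * g x) <= y] `&` [set y | y <= f x]) XS Xw cvw).
    by move=> i x; exact: closedI (@closed_ge _ _) (@closed_le _ _).
  apply: filterS fg => x fgx i; exists i => // n /= i_n.
  have /andP[Sf fS] := dyadic_approx_bounds n fgx.
  have g0 : 0 <= g x := le_trans (normr_ge0 _) fgx.
  rewrite /S; split => //; have := ler_wpM2r g0 (exp2V_le _ _ i_n); lra.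
have w_f : {ae mu, forall x, f x = w x}.
  apply: filterS w_in => x w_in.
  apply/eqP; rewrite eq_le (w_in 0%N).2 andbT; apply/ler_addgt0Pr => e e0.
  have [i Hi] := exists_exp2V_lt (2 * g x) e0.
  have [+ _] := w_in i; rewrite mulrCA; lra.
rewrite (brs_norm_ae_eq Xf Xw w_f).
apply: le_trans (brs_norm_le_dist (XS 0%N) Xw) _.
move: (dist_w 0%N); rewrite /= brs_normN // expr0 invr1 mul1r; lra.
Qed.

End BanachRectSpace.

Section PositiveOperator.
Context {d : measure_display} {T : measurableType d} {R : realType}.
Variable mu : {measure set T -> \bar R}.
Variables (X Y : set (T -> R)) (N NY : (T -> R) -> R) (Top : (T -> R) -> (T -> R)).
Hypotheses (HX : banach_rect_space mu X N) (HY : banach_rect_space mu Y NY).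
Hypothesis HT : positive_linear_op mu X Y Top.

Lemma pos_op_mem f : X f -> Y (Top f).
Proof. by case: HT => + _ _ _; exact. Qed.

Lemma pos_op_lin f g (a : R) : X f -> X g ->
  {ae mu, forall x, Top (fun y => f y + a * g y) x = Top f x + a * Top g x}.
Proof. by case: HT => _ _ + _; exact. Qed.

Lemma pos_op_ge0 f : X f -> {ae mu, forall x, 0 <= f x} -> {ae mu, forall x, 0 <= Top f x}.
Proof. by case: HT => _ _ _ +; exact. Qed.

Lemma pos_opD f g : X f -> X g ->
  {ae mu, forall x, Top (fun y => f y + g y) x = Top f x + Top g x}.
Proof.
move=> Xf Xg; have := pos_op_lin 1 Xf Xg.
have -> : (fun y => f y + 1 * g y) = (fun y => f y + g y) by apply/funext => y; rewrite mul1r.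
by apply: filterS => x ->; rewrite mul1r.
Qed.

Lemma pos_opB f g : X f -> X g ->
  {ae mu, forall x, Top (fun y => f y - g y) x = Top f x - Top g x}.
Proof.
move=> Xf Xg; have := pos_op_lin (-1) Xf Xg.
have -> : (fun y => f y + -1 * g y) = (fun y => f y - g y) by apply/funext => y; rewrite mulN1r.
by apply: filterS => x ->; rewrite mulN1r.
Qed.

Lemma pos_opZ (a : R) f : X f -> {ae mu, forall x, Top (fun y => a * f y) x = a * Top f x}.
Proof.
move=> Xf; have := pos_op_lin (a - 1) Xf Xf.
have -> : (fun y => f y + (a - 1) * f y) = (fun y => a * f y).
  by apply/funext => y; ring.
by apply: filterS => x ->; ring.
Qed.

Lemma pos_op_normB f g : X f -> X g ->
  NY (fun x => Top f x - Top g x) = NY (Top (fun x => f x - g x)).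
Proof.
move=> Xf Xg; apply: (brs_norm_ae_eq HY).
- exact: (brsB HY (pos_op_mem Xf) (pos_op_mem Xg)).
- exact: (pos_op_mem (brsB HX Xf Xg)).
- by apply: filterS (pos_opB Xf Xg) => x ->.
Qed.

Lemma pos_op_normZ (a : R) f : X f -> NY (Top (fun y => a * f y)) = `|a| * NY (Top f).
Proof.
move=> Xf; rewrite -(brs_normZ HY a (pos_op_mem Xf)).
apply: (brs_norm_ae_eq HY _ _ (pos_opZ a Xf)).
- exact: (pos_op_mem (brsZ HX a Xf)).
- exact: (brsZ HY a (pos_op_mem Xf)).
Qed.

Lemma pos_op_abs_le f g : X f -> X g -> {ae mu, forall x, `|f x| <= g x} ->
  {ae mu, forall x, `|Top f x| <= Top g x}.
Proof.
move=> Xf Xg fg.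
have TgDf : {ae mu, forall x, 0 <= Top g x + Top f x}.
  have : {ae mu, forall x, 0 <= g x + f x}.
    by apply: filterS fg => x; rewrite ler_norml => /andP[? ?]; lra.
  by move=> /(pos_op_ge0 (brsD HX Xg Xf)); apply: filterS2 (pos_opD Xg Xf) => x ->.
have TgBf : {ae mu, forall x, 0 <= Top g x - Top f x}.
  have : {ae mu, forall x, 0 <= g x - f x}.
    by apply: filterS fg => x; rewrite ler_norml => /andP[? ?]; lra.
  by move=> /(pos_op_ge0 (brsB HX Xg Xf)); apply: filterS2 (pos_opB Xg Xf) => x ->.
apply: filterS2 TgDf TgBf => x ? ?.
by rewrite ler_norml; apply/andP; split; lra.
Qed.

Lemma pos_op_unbounded_witness :
  ~ (exists2 M : R, 0 <= M & forall f, X f -> NY (Top f) <= M * N f) ->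
  forall n, exists f, [/\ X f, N f <= 2 ^- n & n%:R < NY (Top f)].
Proof.
move=> unbounded n; pose M : R := n.+1%:R * 2 ^+ n.
have /existsNP[f /not_implyP[Xf /negP]] : ~ forall f, X f -> NY (Top f) <= M * N f.
  by move=> HM; apply: unbounded; exists M => //; rewrite mulr_ge0 ?exprn_ge0.
rewrite -ltNge => lt_MNf.
have Nf_ge0 := brs_norm_ge0 HX Xf.
have TNf_gt0 : 0 < NY (Top f).
  by apply: le_lt_trans lt_MNf; rewrite !mulr_ge0 ?exprn_ge0.
pose t := n.+1%:R / NY (Top f).
have t0 : 0 < t by rewrite divr_gt0.
exists (fun x => t * f x); split; first exact: (brsZ HX t Xf).
- rewrite (brs_normZ HX t Xf) gtr0_norm // /t mulrAC ler_pdivrMr //.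
  by rewrite ler_pdivlMl ?exprn_gt0 // mulrCA mulrA ltW.
- by rewrite pos_op_normZ // gtr0_norm // /t mulfVK ?gt_eqF // ltr_nat.
Qed.

Hypotheses (HXs : subsequence_property mu X N) (HYs : subsequence_property mu Y NY).

Lemma pos_op_bounded : exists2 M : R, 0 <= M & forall f, X f -> NY (Top f) <= M * N f.
Proof.
apply: contrapT => /pos_op_unbounded_witness /choice[h Hh].
have Xh n : X (h n) by case: (Hh n).
have [C C0 abs_le] := brs_abs HX.
have [G XG h_le_G] : exists2 G, X G & {ae mu, forall x n, `|h n x| <= G x}.
  apply: (brs_series_dominated HX HXs (a := fun n x => `|h n x|) (c := C)).
  - by move=> n; exact: (abs_le _ (Xh n)).1.
  - by move=> n x; exact: normr_ge0.
  - move=> n; case: (Hh n) => Xhn Nhn _; apply: le_trans (abs_le _ Xhn).2 _.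
    by rewrite mulrC ler_wpM2r // ltW.
have [K K0 dominated] := brs_norm_le_dominated HY HYs.
have Th_le n : NY (Top (h n)) <= K * NY (Top G).
  apply: dominated; [exact: pos_op_mem | exact: pos_op_mem |].
  by apply: pos_op_abs_le => //; apply: filterS h_le_G => x /(_ n).
pose n := Num.Def.archi_bound (K * NY (Top G)).
have := archi_boundP (mulr_ge0 (ltW K0) (brs_norm_ge0 HY (pos_op_mem XG))).
by case: (Hh n) => _ _; have := Th_le n; lra.
Qed.

Lemma pos_op_continuous : op_continuous X N NY Top.
Proof.
have [M M0 bounded] := pos_op_bounded.
move=> f Xf e e0; exists (e / (M + 1)); first by rewrite divr_gt0 // ltr_wpDl.
move=> g Xg lt_gf; rewrite pos_op_normB //.
apply: le_lt_trans (bounded _ (brsB HX Xg Xf)) _.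
apply: le_lt_trans (ler_wpM2l M0 (ltW lt_gf)) _.
by rewrite mulrA ltr_pdivrMr ?ltr_wpDl // mulrDr mulr1 [e * M]mulrC ltrDl.
Qed.

End PositiveOperator.

Section NormEquivalence.
Context {d : measure_display} {T : measurableType d} {R : realType}.

Lemma positive_linear_op_id (mu : {measure set T -> \bar R}) (X : set (T -> R)) :
  positive_linear_op mu X X id.
Proof. by split=> // f g a _ _; exact: aeW. Qed.

Lemma equivalent_norms_of_le (X : set (T -> R)) (N N0 : (T -> R) -> R) :
  (forall f, X f -> 0 <= N f) -> (forall f, X f -> 0 <= N0 f) ->
  (exists2 K, 0 <= K & forall f, X f -> N0 f <= K * N f) ->
  (exists2 K, 0 <= K & forall f, X f -> N f <= K * N0 f) ->
  equivalent_norms X N N0.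
Proof.
move=> N_ge0 N0_ge0 [K1 K1_ge0 le_N0] [K2 K2_ge0 le_N].
exists (K2 + 1)^-1, (K1 + 1); split; rewrite ?invr_gt0 ?ltr_wpDl // => f Xf.
split; last first.
  by apply: le_trans (le_N0 f Xf) _; rewrite mulrDl mul1r lerDl N_ge0.
rewrite ler_pdivrMl ?ltr_wpDl //.
by apply: le_trans (le_N f Xf) _; rewrite mulrDl mul1r lerDl N0_ge0.
Qed.

End NormEquivalence.

Theorem corollary4p4 (d : measure_display) (T : measurableType d) (R : realType)
  (mu : {measure set T -> \bar R}) (mu_fin : (mu setT < +oo)%E)
  (X : set (T -> R)) (N : (T -> R) -> R)
  (HX : banach_rect_space mu X N) (HXs : subsequence_property mu X N) :
  (forall (Y : set (T -> R)) (NY : (T -> R) -> R) (Top : (T -> R) -> (T -> R)),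
      banach_rect_space mu Y NY -> subsequence_property mu Y NY ->
      positive_linear_op mu X Y Top -> op_continuous X N NY Top) /\
  (forall N0 : (T -> R) -> R,
      banach_rect_space mu X N0 -> subsequence_property mu X N0 ->
      equivalent_norms X N N0).
Proof.
split=> [Y NY Top HY HYs HT | N0 HX0 HXs0].
  exact: pos_op_continuous HX HY HT HXs HYs.
have HT := positive_linear_op_id mu X.
apply: equivalent_norms_of_le.
- exact: brs_norm_ge0 HX.
- exact: brs_norm_ge0 HX0.
- exact: pos_op_bounded HX HX0 HT HXs HXs0.
- exact: pos_op_bounded HX0 HX HT HXs0 HXs.
Qed.
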